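(* Let $L$ be a Lie algebra with $Z(L)=0$ and let $I$ be an ideal of $L$. Then $\mathrm{Ann}_L(I)=0$ if and only if $\mathrm{r.ann}_{A(L)}(A_L(I))=0$.
   Context: Lie algebras over a commutative unital ring $\Phi$. $\mathrm{ad}_x(y)=[x,y]$; $A(L)$ is the associative subalgebra of $\mathrm{End}_\Phi(L)$ generated by $\{\mathrm{ad}_x:x\in L\}$, and $A_L(I)$ is its subalgebra generated by $\{\mathrm{ad}_x:x\in I\}$. $\mathrm{Ann}_L(X)=\{a\in L:[a,x]=0\ \forall x\in X\}$, $Z(L)=\mathrm{Ann}_L(L)$. For an associative algebra $B$ and $X\subseteq B$, $\mathrm{r.ann}_B(X)=\{b\in B: Xb=0\}$. *)

From HB Require Import structures.
From mathcomp Require Import all_boot all_order all_algebra.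
Set Implicit Arguments. Unset Strict Implicit. Unset Printing Implicit Defensive.
Import GRing.Theory.
Local Open Scope ring_scope.

Definition is_lie_bracket (R : comPzRingType) (L : lmodType R)
  (br : L -> L -> L) : Prop :=
  [/\ (forall a x y z, br (a *: x + y) z = a *: br x z + br y z),
      (forall a x y z, br z (a *: x + y) = a *: br z x + br z y),
      (forall x, br x x = 0) &
      (forall x y z, br x (br y z) + br y (br z x) + br z (br x y) = 0)].

Definition is_lie_ideal (R : comPzRingType) (L : lmodType R)
  (br : L -> L -> L) (I : L -> Prop) : Prop :=
  [/\ I 0,
      (forall x y, I x -> I y -> I (x + y)),
      (forall (a : R) x, I x -> I (a *: x)) &
      (forall a x, I x -> I (br a x))].

Definition Ann (R : comPzRingType) (L : lmodType R)
  (br : L -> L -> L) (X : L -> Prop) (a : L) : Prop :=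
  forall x, X x -> br a x = 0.

(* Agen br S f : f belongs to the associative (non-unital) subalgebra of
   End_R(L) generated by { ad_x : x in S }, where ad_x = br x.
   Endomorphisms are represented as functions L -> L, identified
   extensionally; multiplication is composition. *)
Inductive Agen (R : comPzRingType) (L : lmodType R)
  (br : L -> L -> L) (S : L -> Prop) : (L -> L) -> Prop :=
| Agen_ad x : S x -> Agen br S (br x)
| Agen_zero : Agen br S (fun _ => 0)
| Agen_add f g : Agen br S f -> Agen br S g -> Agen br S (fun v => f v + g v)
| Agen_scale (c : R) f : Agen br S f -> Agen br S (fun v => c *: f v)
| Agen_comp f g : Agen br S f -> Agen br S g -> Agen br S (fun v => f (g v))
| Agen_ext f g : Agen br S f -> (forall v, f v = g v) -> Agen br S g.

Definition AL (R : comPzRingType) (L : lmodType R) (br : L -> L -> L) :=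
  Agen br (fun _ => True).
Definition ALI (R : comPzRingType) (L : lmodType R) (br : L -> L -> L)
  (I : L -> Prop) := Agen br I.

Definition rann (R : comPzRingType) (L : lmodType R)
  (B X : (L -> L) -> Prop) (b : L -> L) : Prop :=
  B b /\ forall c, X c -> forall v, c (b v) = 0.

(* If a annihilates I, the Jacobi identity shows that ad_x kills the image of ad_a for every
   x in I, hence so does all of A_L(I): ad_a lies in the right annihilator, and it vanishes
   only when a is central.  Conversely, if A_L(I) kills the image of b, then every value
   b v annihilates I. *)
From mathcomp Require Import all_boot all_order all_algebra.
Local Open Scope ring_scope.
Import GRing.Theory.

Section LieBracket.
Variables (R : comPzRingType) (L : lmodType R) (br : L -> L -> L).
Hypothesis lie_br : is_lie_bracket br.

Lemma brDl x y z : br (x + y) z = br x z + br y z.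
Proof. by case: lie_br => linl _ _ _; rewrite -{1}(scale1r x) linl scale1r. Qed.

Lemma brDr x y z : br z (x + y) = br z x + br z y.
Proof. by case: lie_br => _ linr _ _; rewrite -{1}(scale1r x) linr scale1r. Qed.

Lemma br0r z : br z 0 = 0.
Proof. by apply: (@addrI _ (br z 0)); rewrite -brDr !addr0. Qed.

Lemma brC x y : br x y = - br y x.
Proof.
case: lie_br => _ _ alt _; apply/eqP; rewrite -addr_eq0.
by have := alt (x + y); rewrite brDl !brDr !alt add0r addr0 => ->.
Qed.

Lemma br_eq0C x y : br x y = 0 -> br y x = 0.
Proof. by rewrite brC => /eqP; rewrite oppr_eq0 => /eqP. Qed.

Lemma br_ideal_Ann_eq0 I a x w :
  is_lie_ideal br I -> Ann br I a -> I x -> br x (br a w) = 0.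
Proof.
case=> _ _ _ brI annIa Ix; case: lie_br => _ _ _ jacobi.
have := jacobi x a w.
by rewrite (annIa _ (brI w x Ix)) [br x a]brC (annIa x Ix) oppr0 br0r !addr0.
Qed.

End LieBracket.

Section GeneratedAlgebra.
Variables (R : comPzRingType) (L : lmodType R) (br : L -> L -> L) (S : L -> Prop).
Hypothesis br0r_gen : forall x, S x -> br x 0 = 0.

Lemma Agen_map0 f : Agen br S f -> f 0 = 0.
Proof.
elim=> {f} [x Sx | | f g _ f0 _ g0 | c f _ f0 | f g _ f0 _ g0 | f g _ f0 fg].
- exact: br0r_gen.
- by [].
- by rewrite f0 g0 addr0.
- by rewrite f0 scaler0.
- by rewrite g0 f0.
- by rewrite -fg.
Qed.

Lemma Agen_rann (b : L -> L) :
  (forall x, S x -> forall v, br x (b v) = 0) ->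
  forall f, Agen br S f -> forall v, f (b v) = 0.
Proof.
move=> genb f; elim=> {f} [x Sx | | f g _ fb _ gb | c f _ fb | f g fS _ _ gb | f g _ fb fg] v.
- exact: genb.
- by [].
- by rewrite fb gb addr0.
- by rewrite fb scaler0.
- by rewrite gb (Agen_map0 _ fS).
- by rewrite -fg.
Qed.

End GeneratedAlgebra.

Theorem mainTheorem9 (R : comPzRingType) (L : lmodType R)
  (br : L -> L -> L) (I : L -> Prop) :
  is_lie_bracket br ->
  (forall z, Ann br (fun _ => True) z -> z = 0) ->
  is_lie_ideal br I ->
  ((forall a, Ann br I a -> a = 0) <->
   (forall b, rann (AL br) (ALI br I) b -> forall v, b v = 0)).
Proof.
move=> lie_br centerless idealI; split.
- move=> annI0 b [_ rannb] v; apply: annI0 => x Ix.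
  exact: br_eq0C lie_br _ _ (rannb _ (Agen_ad br Ix) v).
- move=> rann0 a annIa; apply: centerless => v _; apply: rann0.
  split; first exact: Agen_ad.
  apply: Agen_rann => [x _|x Ix w]; first exact: br0r.
  exact: br_ideal_Ann_eq0 idealI annIa Ix.
Qed.
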